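(* Let $\boldsymbol{\lambda}\in\Delta_N$, $\boldsymbol{\nu}=(\nu_1,\dots,\nu_N)\in\mathcal{P}_1(\mathbb{R})^N$, $\theta\in[0,1]$, $\nu^\theta=\mathrm{VMed}_{\boldsymbol{\lambda}}(\theta,\boldsymbol{\nu})$ and $\mu^\theta=\mathrm{HMed}_{\boldsymbol{\lambda}}(\theta,\boldsymbol{\nu})$. Then: (1) if $\nu_1,\dots,\nu_N$ are atomless, then so are $\nu^\theta$ and $\mu^\theta$; (2) if $\nu_1,\dots,\nu_N$ have connected supports, then so does $\mu^\theta$.
   Context: $\Delta_N$ is the unit simplex of $\mathbb{R}^N$; $\mathcal{P}_1(\mathbb{R})$ denotes Borel probability measures on $\mathbb{R}$ with finite first moment. For $\nu\in\mathcal{P}_1(\mathbb{R})$, $F_\nu(x)=\nu((-\infty,x])$ and $Q_\nu(t)=\inf\{x:F_\nu(x)\ge t\}$. For $\mathbf{x}\in\mathbb{R}^N$, $\mathrm{M}^-_{\boldsymbol{\lambda}}(\mathbf{x})=\inf\{y:\sum_{i:x_i\le y}\lambda_i\ge\frac12\}$, $\mathrm{M}^+_{\boldsymbol{\lambda}}(\mathbf{x})=\sup\{y:\sum_{i:x_i<y}\lambda_i\le\frac12\}$. $\mathrm{VMed}_{\boldsymbol{\lambda}}(\theta,\boldsymbol{\nu})$ is the probability measure with cdf $(1-\theta)\mathrm{M}^-_{\boldsymbol{\lambda}}(F_{\nu_1}(x),\dots,F_{\nu_N}(x))+\theta\mathrm{M}^+_{\boldsymbol{\lambda}}(F_{\nu_1}(x),\dots,F_{\nu_N}(x))$;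 $\mathrm{HMed}_{\boldsymbol{\lambda}}(\theta,\boldsymbol{\nu})$ is the probability measure whose quantile function on $(0,1)$ is $(1-\theta)\mathrm{M}^-_{\boldsymbol{\lambda}}(Q_{\nu_1}(t),\dots,Q_{\nu_N}(t))+\theta\mathrm{M}^+_{\boldsymbol{\lambda}}(Q_{\nu_1}(t),\dots,Q_{\nu_N}(t))$. *)

From HB Require Import structures.
From mathcomp Require Import all_boot all_order all_algebra.
From mathcomp Require Import all_classical all_reals all_analysis.
Set Implicit Arguments. Unset Strict Implicit. Unset Printing Implicit Defensive.
Import Order.TTheory GRing.Theory Num.Theory numFieldNormedType.Exports.
Local Open Scope classical_set_scope.
Local Open Scope ring_scope.

Section Defs.
Context {R : realType}.

Definition in_simplex (N : nat) (lam : 'I_N -> R) : Prop :=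
  (forall i, 0 <= lam i) /\ \sum_(i < N) lam i = 1.

Definition first_moment_finite (mu : probability R R) : Prop :=
  (\int[mu]_x (`|x|%:E) < +oo)%E.

Definition cdf (mu : probability R R) (x : R) : R := fine (mu `]-oo, x]%classic).

Definition quantile (mu : probability R R) (t : R) : R :=
  inf [set x | t <= cdf mu x].

Definition Mminus (N : nat) (lam : 'I_N -> R) (x : 'I_N -> R) : R :=
  inf [set y | 2^-1 <= \sum_(i < N | x i <= y) lam i].

Definition Mplus (N : nat) (lam : 'I_N -> R) (x : 'I_N -> R) : R :=
  sup [set y | \sum_(i < N | x i < y) lam i <= 2^-1].

Definition is_VMed (N : nat) (lam : 'I_N -> R) (theta : R)
  (nu : 'I_N -> probability R R) (mu : probability R R) : Prop :=
  forall x, cdf mu x = (1 - theta) * Mminus lam (fun i => cdf (nu i) x)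
                      + theta * Mplus lam (fun i => cdf (nu i) x).

Definition is_HMed (N : nat) (lam : 'I_N -> R) (theta : R)
  (nu : 'I_N -> probability R R) (mu : probability R R) : Prop :=
  forall t, 0 < t < 1 ->
    quantile mu t = (1 - theta) * Mminus lam (fun i => quantile (nu i) t)
                    + theta * Mplus lam (fun i => quantile (nu i) t).

Definition atomless (mu : probability R R) : Prop :=
  forall x : R, mu [set x] = 0%E.

Definition msupport (mu : probability R R) : set R :=
  [set x | forall e : R, 0 < e -> (0 < mu (ball x e))%E].

End Defs.

From Pilot Require Import Defs.
From HB Require Import structures.
From mathcomp Require Import all_boot all_order all_algebra.
From mathcomp Require Import all_classical all_reals all_analysis.
From mathcomp Require Import lra.

(* Both medians apply [Mtheta a = (1 - theta) Mminus a + theta Mplus a]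
   pointwise, to the cdfs resp. the quantile functions of the [nu i], and
   [Mtheta] is monotone and compatible with translations: [b <= a + c]
   pointwise gives [Mtheta b <= Mtheta a + c]. An atom of the vertical median
   at [x] would be a jump of its cdf at [x], whereas the cdfs of the atomless
   [nu i] have a common small oscillation around [x]. A probability on R is
   atomless iff its quantile function is strictly increasing on ]0, 1[, and its
   support is an interval iff that function is right continuous there; both
   properties pass from the finitely many [nu i] to the horizontal median by
   taking a common gap, resp. a common modulus, and applying the translation
   inequality. *)

Set Implicit Arguments. Unset Strict Implicit. Unset Printing Implicit Defensive.
Import Order.TTheory GRing.Theory Num.Theory numFieldNormedType.Exports.
Local Open Scope classical_set_scope.
Local Open Scope ring_scope.
Local Notation cdf := Defs.cdf.

Section real_valued_probability.
Context {R : realType} (mu : probability R R).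

Definition pr (A : set R) : R := fine (mu A).

Lemma prE A : measurable A -> mu A = (pr A)%:E.
Proof. by move=> mA; rewrite /pr fineK // fin_num_measure. Qed.

Lemma pr0 : pr set0 = 0.
Proof. by rewrite /pr measure0. Qed.

Lemma pr_ge0 A : 0 <= pr A.
Proof. exact/fine_ge0/measure_ge0. Qed.

Lemma pr_le1 A : measurable A -> pr A <= 1.
Proof. by move=> mA; rewrite -lee_fin -prE ?probability_le1. Qed.

Lemma measure0_pr_le0 A : measurable A -> pr A <= 0 -> mu A = 0%E.
Proof.
move=> mA A_le0; rewrite prE //; congr EFin.
by apply/eqP; rewrite eq_le A_le0 pr_ge0.
Qed.

Lemma pr_le A B : measurable A -> measurable B -> A `<=` B -> pr A <= pr B.
Proof. by move=> mA mB AB; rewrite -lee_fin -!prE // le_measure ?inE. Qed.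

Lemma pr_setU A B : measurable A -> measurable B -> A `&` B = set0 ->
  pr (A `|` B) = pr A + pr B.
Proof.
move=> mA mB AB0; apply/EFin_inj.
by rewrite EFinD -!prE ?measureU //; exact: measurableU.
Qed.

Lemma pr_setC A : measurable A -> pr (~` A) = 1 - pr A.
Proof.
move=> mA; apply/EFin_inj.
by rewrite EFinB -!prE ?probability_setC //; exact: measurableC.
Qed.

Lemma pr_bigcap_approx (A : (set R)^nat) (e : R) :
  (forall n, measurable (A n)) -> (forall n, A n.+1 `<=` A n) -> 0 < e ->
  exists n, pr (A n) < pr (\bigcap_n A n) + e.
Proof.
move=> mA decA e_gt0.
have mcapA : measurable (\bigcap_n A n) by exact: bigcapT_measurable.
have niA : nonincreasing_seq A.
  by apply/nonincreasing_seqP => n; rewrite subsetEset; exact: decA.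
have /fine_cvgP[_ /cvgr_lt/(_ (pr (\bigcap_n A n) + e))] :
    (mu \o A) n @[n --> \oo] --> (pr (\bigcap_n A n))%:E.
  rewrite -(prE mcapA); apply: nonincreasing_cvg_mu => //.
  exact: le_lt_trans (probability_le1 _ (mA 0%N)) (ltry 1).
by rewrite ltrDl => /(_ e_gt0)[n _ /(_ n (leqnn n))]; exists n.
Qed.

Lemma cdfE x : cdf mu x = pr `]-oo, x].
Proof. by []. Qed.

Lemma cdf_split x y : x <= y -> cdf mu y = cdf mu x + pr `]x, y].
Proof.
move=> xy; rewrite !cdfE (@itv_bndbnd_setU _ _ _ (BRight x)) // pr_setU //.
apply/seteqP; split => // z [] /=.
by rewrite !in_itv /= => zx /andP[/(le_lt_trans zx)]; rewrite ltxx.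
Qed.

Lemma cdf_nondecreasing : {homo cdf mu : x y / x <= y}.
Proof. by move=> x y xy; rewrite (cdf_split xy) lerDl pr_ge0. Qed.

Lemma cdf_le1 x : cdf mu x <= 1.
Proof. exact: pr_le1. Qed.

Lemma cdf_small s : 0 < s -> exists x, cdf mu x < s.
Proof.
move=> s_gt0; pose A n := `]-oo, - n%:R]%classic : set R.
have capA : \bigcap_n A n = set0.
  apply/seteqP; split => // x /(_ (Num.trunc (- x)).+1 I).
  by rewrite /A /= in_itv /= lerNr => /le_lt_trans/(_ (truncnS_gt _)); rewrite ltxx.
have decA n : A n.+1 `<=` A n.
  by move=> x; rewrite /A /= !in_itv /= => /le_trans; apply; rewrite lerN2 ler_nat.
have [n] := pr_bigcap_approx (fun=> measurable_itv _) decA s_gt0.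
by rewrite capA pr0 add0r; exists (- n%:R).
Qed.

Lemma cdf_large s : s < 1 -> exists x, s <= cdf mu x.
Proof.
rewrite -subr_gt0 => s_lt1; pose A n := `]n%:R, +oo[%classic : set R.
have capA : \bigcap_n A n = set0.
  apply/seteqP; split => // x /(_ (Num.trunc x).+1 I).
  by rewrite /A /= in_itv /= andbT => /(lt_trans (truncnS_gt _)); rewrite ltxx.
have decA n : A n.+1 `<=` A n.
  by move=> x; rewrite /A /= !in_itv /= !andbT; apply: le_lt_trans; rewrite ler_nat.
have [n] := pr_bigcap_approx (fun=> measurable_itv _) decA s_lt1.
rewrite capA pr0 add0r /A -setCitvl pr_setC; last exact: measurable_itv.
by exists n%:R; rewrite cdfE; lra.
Qed.

Lemma cdf_cont_nonatom x e : mu [set x] = 0%E -> 0 < e ->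
  exists2 d, 0 < d & cdf mu (x + d) < cdf mu (x - d) + e.
Proof.
move=> x0 e_gt0; pose A n := `]x - n.+1%:R^-1, x + n.+1%:R^-1]%classic : set R.
have capA : \bigcap_n A n = [set x].
  apply/seteqP; split => [z Az|_ -> n _]; last first.
    by rewrite /A /= in_itv /= ltrBlDr ltrDl lerDl invr_ge0 invr_gt0 ltr0n ler0n.
  have [zx|xz] := leP z x.
    rewrite set1_bigcap_oc => n _; have := Az n I.
    by rewrite /A /= !in_itv /= zx => /andP[-> _].
  have [n] := ltr_add_invr xz; have := Az n I.
  by rewrite /A /= in_itv /= => /andP[_ /le_lt_trans/[apply]]; rewrite ltxx.
have decA n : A n.+1 `<=` A n.
  have le_inv : n.+2%:R^-1 <= n.+1%:R^-1 :> R by rewrite lef_pV2 ?posrE ?ler_nat.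
  by apply: subset_itv; rewrite bnd_simp ?lerD2l ?lerN2.
have [n] := pr_bigcap_approx (fun=> measurable_itv _) decA e_gt0.
rewrite capA /pr x0 add0r => A_lt; exists n.+1%:R^-1; first by rewrite invr_gt0.
by rewrite (@cdf_split (x - n.+1%:R^-1)) ?ltrD2l // lerD2l ge0_cp ?invr_ge0.
Qed.

End real_valued_probability.

Section quantile.
Context {R : realType} (mu : probability R R).

Lemma quantile_le_cdf t x : 0 < t -> t <= cdf mu x -> quantile mu t <= x.
Proof.
move=> t_gt0 tx; apply: ge_inf => //; have [w w_lt] := cdf_small mu t_gt0.
exists w => y /=; apply: contraTT; rewrite -!ltNge => yw.
exact: le_lt_trans (cdf_nondecreasing mu (ltW yw)) w_lt.
Qed.

Lemma cdf_lt_quantile t x : 0 < t -> x < quantile mu t -> cdf mu x < t.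
Proof.
by move=> t_gt0; apply: contraTT; rewrite -!leNgt; exact: quantile_le_cdf.
Qed.

Lemma quantile_lt_cdf t x : t < 1 -> quantile mu t < x -> t <= cdf mu x.
Proof.
move=> t_lt1; have [w tw] := cdf_large mu t_lt1.
move=> /(inf_lt (ex_intro _ w tw))[y /= ty yx].
exact: le_trans ty (cdf_nondecreasing mu (ltW yx)).
Qed.

Lemma quantile_nondecreasing s t : 0 < s -> s <= t -> t < 1 ->
  quantile mu s <= quantile mu t.
Proof.
move=> s_gt0 st t_lt1; apply/ler_addgt0Pr => e e_gt0.
apply: quantile_le_cdf => //; apply: le_trans st _.
by apply: quantile_lt_cdf; rewrite // ltrDl.
Qed.

Lemma msupport_cdfP x :
  msupport mu x <-> forall d, 0 < d -> cdf mu (x - d) < cdf mu (x + d).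
Proof.
have mball d : measurable (ball x d) := measurable_realfun.measurable_ball x d.
split => [x_supp d d_gt0 | cdf_lt e e_gt0].
  rewrite (@cdf_split _ mu (x - d) (x + d)) ?ltrDl; last lra.
  apply: (lt_le_trans _ (pr_le mu (mball d) (measurable_itv _) _)).
    by rewrite -lte_fin -prE //; exact: x_supp.
  by rewrite ball_itv; apply: subset_itv; rewrite bnd_simp.
have e2_gt0 : 0 < e / 2 by rewrite divr_gt0.
have sub_ball : `]x - e / 2, x + e / 2] `<=` ball x e.
  by rewrite ball_itv; apply: subset_itv; rewrite bnd_simp; lra.
rewrite prE // lte_fin.
apply: lt_le_trans (pr_le mu (measurable_itv _) (mball e) sub_ball).
have := cdf_lt _ e2_gt0.
by rewrite (@cdf_split _ mu (x - e / 2) (x + e / 2)) ?ltrDl //; lra.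
Qed.

Lemma quantile_in_msupport t : 0 < t < 1 -> msupport mu (quantile mu t).
Proof.
case/andP => t_gt0 t_lt1; apply/msupport_cdfP => d d_gt0.
apply: (@lt_le_trans _ _ t); first by apply: cdf_lt_quantile; rewrite // gtrBl.
by apply: quantile_lt_cdf; rewrite // ltrDl.
Qed.

End quantile.

Section atoms_and_support.
Context {R : realType} (mu : probability R R).

Lemma atomless_quantileP : atomless mu <->
  forall s t, 0 < s -> s < t -> t < 1 -> quantile mu s < quantile mu t.
Proof.
split => [mu_atomless s t s_gt0 st t_lt1 | Q_incr x].
  rewrite ltNge; apply/negP => Qts; set q := quantile mu s in Qts.
  have [d d_gt0 cdf_gap] :
      exists2 d, 0 < d & cdf mu (q + d) < cdf mu (q - d) + (t - s).
    by apply: cdf_cont_nonatom; rewrite ?subr_gt0.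
  have : t <= cdf mu (q + d).
    by apply: quantile_lt_cdf; rewrite // (le_lt_trans Qts) ?ltrDl.
  have : cdf mu (q - d) < s by apply: cdf_lt_quantile; rewrite // gtrBl.
  lra.
apply: measure0_pr_le0 => //; rewrite leNgt; apply/negP => c_gt0.
set c := pr mu [set x] in c_gt0; set a := pr mu `]-oo, x[.
have cdf_x : cdf mu x = a + c.
  rewrite cdfE -(setUitv1 true (_ : -oo%O <= BLeft x)%O) //.
  rewrite pr_setU //; apply/seteqP; split => // z [] /=.
  by rewrite in_itv /= => /[swap] ->; rewrite ltxx.
have Q_ge_x : x <= quantile mu (a + c / 3).
  rewrite leNgt; apply/negP => Qx.
  pose w := (quantile mu (a + c / 3) + x) / 2.
  have : a + c / 3 <= cdf mu w.
    by apply: quantile_lt_cdf; rewrite /w; have := cdf_le1 mu x; lra.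
  have : cdf mu w <= a.
    apply: pr_le => // z /=; rewrite !in_itv /= => /le_lt_trans; apply.
    by rewrite /w; lra.
  lra.
have a_ge0 : 0 <= a := pr_ge0 _ _.
have := cdf_le1 mu x; rewrite cdf_x => cdf_x_le1.
have := Q_incr (a + c / 3) (a + 2 * c / 3) ltac:(lra) ltac:(lra) ltac:(lra).
have : quantile mu (a + 2 * c / 3) <= x by apply: quantile_le_cdf; lra.
lra.
Qed.

(* As the quantile function is nondecreasing, the right-hand side says that it
   is right continuous on ]0, 1[. *)
Lemma connected_msupport_quantileP : connected (msupport mu) <->
  forall t, 0 < t < 1 -> forall e, 0 < e ->
  exists2 s, t < s < 1 & quantile mu s < quantile mu t + e.
Proof.
split => [/connected_intervalP supp_itv t t01 e e_gt0 | Q_rc].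
  have /andP[t_gt0 t_lt1] := t01; set q := quantile mu t.
  pose s1 := (t + 1) / 2; have s1_lt1 : s1 < 1 by rewrite /s1; lra.
  have [Qs1_lt|Qs1_ge] := ltP (quantile mu s1) (q + e).
    by exists s1 => //; apply/andP; split; rewrite /s1; lra.
  have : msupport mu (q + e / 2).
    apply: (supp_itv q (quantile mu s1)); first exact: quantile_in_msupport.
      by apply: quantile_in_msupport; apply/andP; split; rewrite /s1; lra.
    by apply/andP; split; lra.
  move=> /msupport_cdfP/(_ (e / 4)) cdf_lt.
  have e4_gt0 : 0 < e / 4 by lra.
  have : t <= cdf mu (q + e / 2 - e / 4).
    by apply: quantile_lt_cdf; rewrite // /q; lra.
  move=> /le_lt_trans/(_ (cdf_lt e4_gt0)); set w := q + e / 2 + e / 4 => t_lt.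
  exists (Order.min (cdf mu w) s1).
    by rewrite lt_min gt_min s1_lt1 orbT andbT t_lt /= /s1; lra.
  apply: (@le_lt_trans _ _ w); last by rewrite /w; lra.
  apply: quantile_le_cdf; last by rewrite ge_min lexx.
  by rewrite lt_min (lt_trans t_gt0 t_lt) /s1; lra.
apply/connected_intervalP => x y x_supp y_supp z /andP[xz zy].
apply: contrapT => z_nsupp.
have x_lt_z : x < z.
  by rewrite lt_neqAle xz andbT; apply: contra_notN z_nsupp => /eqP <-.
have z_lt_y : z < y.
  by rewrite lt_neqAle zy andbT; apply: contra_notN z_nsupp => /eqP ->.
have [e e_gt0 cdf_flat] : exists2 e, 0 < e & cdf mu (z + e) <= cdf mu (z - e).
  move/msupport_cdfP: z_nsupp => /existsNP[e /not_implyP[e_gt0 /negP]].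
  by rewrite -leNgt; exists e.
set t := cdf mu z.
have t_gt0 : 0 < t.
  have := (msupport_cdfP _ _).1 x_supp (z - x).
  by rewrite subr_gt0 subrKC => /(_ x_lt_z); exact/le_lt_trans/pr_ge0.
have t_lt1 : t < 1.
  have := (msupport_cdfP _ _).1 y_supp (y - z).
  by rewrite subr_gt0 subKr => /(_ z_lt_y)/lt_le_trans; apply; exact: cdf_le1.
have [s /andP[ts s_lt1] Qs_lt] := Q_rc t (introT andP (conj t_gt0 t_lt1)) e e_gt0.
have cdf_z_e : cdf mu (z - e) <= t by apply: cdf_nondecreasing; lra.
have cdf_ze : t <= cdf mu (z + e) by apply: cdf_nondecreasing; lra.
have : quantile mu t <= z - e by apply: quantile_le_cdf; lra.
have : z + e <= quantile mu s.
  by rewrite leNgt; apply/negP => /(quantile_lt_cdf s_lt1); lra.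
lra.
Qed.

End atoms_and_support.

Section weighted_median.
Context {R : realType} (N : nat) (lam : 'I_N -> R).
Hypothesis lam_simplex : in_simplex lam.

Lemma weight_sum_le (P Q : pred 'I_N) : subpred P Q ->
  \sum_(i | P i) lam i <= \sum_(i | Q i) lam i.
Proof.
move=> PQ; rewrite [leLHS]big_mkcond [leRHS]big_mkcond /=.
apply: ler_sum => i _; case: ifP => [/PQ -> //|_].
by case: ifP => // _; case: lam_simplex.
Qed.

Lemma weight_sum_all (P : pred 'I_N) : P =1 predT -> \sum_(i | P i) lam i = 1.
Proof. by move=> P_all; case: lam_simplex => _ <-; exact: eq_bigl. Qed.

Lemma Mminus_shift (a b : 'I_N -> R) c : (forall i, b i <= a i + c) ->
  Mminus lam b <= Mminus lam a + c.
Proof.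
move=> bac; rewrite -lerBlDr; apply: lb_le_inf.
  exists (\big[Order.max/0]_i a i); rewrite /= weight_sum_all; first lra.
  by move=> i; rewrite le_bigmax.
move=> y /= half_le; rewrite lerBlDr; apply: ge_inf.
  exists (\big[Order.min/0]_i b i) => z /=.
  apply: contraTT; rewrite -!ltNge => zb.
  rewrite big_pred0 ?invr_gt0 // => i; apply/negbTE; rewrite -ltNge.
  exact: lt_le_trans zb (bigmin_le _ _ _).
rewrite /= (le_trans half_le) // weight_sum_le // => i /= ay.
by rewrite (le_trans (bac i)) ?lerD2r.
Qed.

Lemma Mplus_shift (a b : 'I_N -> R) c : (forall i, b i <= a i + c) ->
  Mplus lam b <= Mplus lam a + c.
Proof.
move=> bac; apply: ge_sup.
  exists (\big[Order.min/0]_i b i); rewrite /= big_pred0 ?invr_ge0 // => i.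
  by apply/negbTE; rewrite -leNgt bigmin_le.
move=> y /= le_half; rewrite -lerBlDr; apply: ub_le_sup.
  exists (\big[Order.max/0]_i a i) => z /=.
  apply: contraTT; rewrite -!ltNge => az.
  rewrite weight_sum_all; first lra.
  by move=> i; exact: le_lt_trans (le_bigmax _ _ _) az.
rewrite /= (le_trans _ le_half) // weight_sum_le // => i /=.
by rewrite ltrBrDr => /(le_lt_trans (bac i)).
Qed.

Variable theta : R.
Hypothesis theta01 : 0 <= theta <= 1.

Definition Mtheta (a : 'I_N -> R) : R :=
  (1 - theta) * Mminus lam a + theta * Mplus lam a.

Lemma Mtheta_shift (a b : 'I_N -> R) c : (forall i, b i <= a i + c) ->
  Mtheta b <= Mtheta a + c.
Proof.
move=> bac; have := Mminus_shift bac; have := Mplus_shift bac.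
rewrite /Mtheta; case/andP: theta01; nra.
Qed.

Lemma Mtheta_lt (a b : 'I_N -> R) : (forall i, b i < a i) -> Mtheta b < Mtheta a.
Proof.
move=> ba; pose d := \big[Order.min/1]_i (a i - b i).
have d_gt0 : 0 < d by apply: lt_bigmin => // i _; rewrite subr_gt0.
have : Mtheta b <= Mtheta a - d.
  apply: Mtheta_shift => i.
  by have := bigmin_le 1 i (fun i => a i - b i); rewrite -/d; lra.
lra.
Qed.

End weighted_median.

Section median_measures.
Context {R : realType} (N : nat) (lam : 'I_N -> R) (theta : R).
Context (nu : 'I_N -> probability R R) (mu : probability R R).
Hypotheses (lam_simplex : in_simplex lam) (theta01 : 0 <= theta <= 1).

Lemma VMed_atomless : is_VMed lam theta nu mu ->
  (forall i, atomless (nu i)) -> atomless mu.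
Proof.
move=> mu_VMed nu_atomless x; apply: measure0_pr_le0 => //.
rewrite leNgt; apply/negP => c_gt0; set c := pr mu [set x] in c_gt0.
have c2_gt0 : 0 < c / 2 by lra.
have /choice[d d_spec] : forall i, exists d,
    0 < d /\ cdf (nu i) (x + d) < cdf (nu i) (x - d) + c / 2.
  by move=> i; have [d] := cdf_cont_nonatom (nu_atomless i x) c2_gt0; exists d.
pose d0 := \big[Order.min/1]_i d i.
have d0_gt0 : 0 < d0 by apply: lt_bigmin => // i _; case: (d_spec i).
have cdf_nu_gap i : cdf (nu i) x <= cdf (nu i) (x - d0) + c / 2.
  have [d_gt0 cdf_lt] := d_spec i; have d0_le : d0 <= d i := bigmin_le _ _ _.
  have : cdf (nu i) x <= cdf (nu i) (x + d i) by apply: cdf_nondecreasing; lra.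
  have : cdf (nu i) (x - d i) <= cdf (nu i) (x - d0).
    by apply: cdf_nondecreasing; lra.
  lra.
have mu_cdf y : cdf mu y = Mtheta lam theta (fun i => cdf (nu i) y) := mu_VMed y.
have := Mtheta_shift lam_simplex theta01 cdf_nu_gap; rewrite -!mu_cdf.
rewrite (@cdf_split _ mu (x - d0) x); last lra.
have : c <= pr mu `]x - d0, x].
  by apply: pr_le => // z /= ->; rewrite in_itv /= lexx andbT; lra.
lra.
Qed.

Lemma HMed_atomless : is_HMed lam theta nu mu ->
  (forall i, atomless (nu i)) -> atomless mu.
Proof.
move=> mu_HMed nu_atomless; apply/atomless_quantileP => s t s_gt0 st t_lt1.
have in01 r : s <= r <= t -> 0 < r < 1.
  by move=> /andP[? ?]; apply/andP; split; lra.
rewrite !mu_HMed ?in01 ?lexx ?(ltW st) //; apply: Mtheta_lt => // i.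
exact: (atomless_quantileP (nu i)).1 (nu_atomless i) _ _ s_gt0 st t_lt1.
Qed.

Lemma HMed_connected_msupport : is_HMed lam theta nu mu ->
  (forall i, connected (msupport (nu i))) -> connected (msupport mu).
Proof.
move=> mu_HMed nu_conn; apply/connected_msupport_quantileP => t t01 e e_gt0.
have /andP[t_gt0 t_lt1] := t01; have e2_gt0 : 0 < e / 2 by lra.
have /choice[s s_spec] : forall i, exists s,
    t < s < 1 /\ quantile (nu i) s < quantile (nu i) t + e / 2.
  move=> i; have /connected_msupport_quantileP := nu_conn i.
  by move=> /(_ t t01 _ e2_gt0)[s]; exists s.
pose s0 := \big[Order.min/(t + 1) / 2]_i s i.
have t_lt_s0 : t < s0.
  by apply: lt_bigmin => [|i _]; [lra | case: (s_spec i) => /andP[]].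
have s0_lt1 : s0 < 1 by apply: le_lt_trans (bigmin_le_id _ _ _ _) _; lra.
exists s0; first by rewrite t_lt_s0.
have s0_in01 : 0 < s0 < 1 by apply/andP; split; lra.
rewrite !mu_HMed //.
have Q_nu_gap i : quantile (nu i) s0 <= quantile (nu i) t + e / 2.
  have [/andP[_ s_lt1] Q_lt] := s_spec i.
  apply/ltW/le_lt_trans/Q_lt; apply: quantile_nondecreasing s_lt1; first lra.
  exact: bigmin_le.
have := Mtheta_shift lam_simplex theta01 Q_nu_gap; rewrite /Mtheta; lra.
Qed.

End median_measures.

Theorem lemma4p5 (R : realType) (N : nat) (lam : 'I_N -> R)
  (nu : 'I_N -> probability R R) (theta : R)
  (nutheta mutheta : probability R R) :
  in_simplex lam ->
  (forall i, first_moment_finite (nu i)) ->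
  0 <= theta <= 1 ->
  is_VMed lam theta nu nutheta ->
  is_HMed lam theta nu mutheta ->
  ((forall i, atomless (nu i)) -> atomless nutheta /\ atomless mutheta) /\
  ((forall i, connected (msupport (nu i))) -> connected (msupport mutheta)).
Proof.
move=> lam_simplex _ theta01 nutheta_VMed mutheta_HMed.
split; last exact: HMed_connected_msupport lam_simplex theta01 mutheta_HMed.
move=> nu_atomless; split.
  exact: VMed_atomless lam_simplex theta01 nutheta_VMed nu_atomless.
exact: HMed_atomless lam_simplex theta01 mutheta_HMed nu_atomless.
Qed.
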